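(* Consider each of the following smooth families of functions $F_{\mathbf c,\mathbf s}:\mathbb{R}^2\to\mathbb{R}$ of $\mathbf x=(x,y)$, with parameters $\mathbf c$ (possibly absent) and $\mathbf s=(s_1,s_2)$, together with the induced family of maps $\mathbf f_{\mathbf c}:\mathbb{R}^2\to\mathbb{R}^2$ between planes, and the associated number $N$: (1) Fold ($A_2$), $N=2$: $F_{\mathbf s}=-s_1x+s_2y+\tfrac12x^2-\tfrac13y^3$, $\mathbf f(x,y)=(x,\,y^2)$. (2) Cusp ($A_3$), $N=3$: $F_{\mathbf s}=-s_1x+s_2y+\tfrac12x^2-\tfrac12s_1y^2-\tfrac14y^4$, $\mathbf f(x,y)=(x,\,xy+y^3)$. (3) Swallowtail ($A_4$), $N=4$: $F_{c,\mathbf s}=s_1x-s_2y-\tfrac12s_2x^2+\tfrac12y^2-\tfrac13cx^3-\tfrac15x^5$, $\mathbf f_c(x,y)=(xy+cx^2+x^4,\,y)$. (4) Elliptic umbilic ($D_4^-$), $N=4$: $F_{c,\mathbf s}=s_1x+s_2y+c(x^2+y^2)+x^3-3xy^2$, $\mathbf f_c(x,y)=(3y^2-3x^2-2cx,\,6xy-2cy)$. (5) Hyperbolic umbilic ($D_4^+$), $N=4$: $F_{c,\mathbf s}=s_1x+s_2y+cxy+x^3+y^3$, $\mathbf f_c(x,y)=(-3x^2-cy,\,-3y^2-cx)$. (6) Butterfly ($A_5$), $N=5$: $F_{\mathbf c,\mathbf s}=x^6+c_1x^4+c_2x^3+s_2x^2+s_1x+\tfrac12y^2-s_2y$, $\mathbf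 f_{\mathbf c}(x,y)=(-2xy-3c_2x^2-4c_1x^3-6x^5,\,y)$. (7) Parabolic umbilic ($D_5$), $N=5$: $F_{\mathbf c,\mathbf s}=x^2y+y^4+c_1x^2+c_2y^2-s_1x-s_2y$, $\mathbf f_{\mathbf c}(x,y)=(2c_1x+2xy,\,2c_2y+x^2+4y^3)$. (8) Wigwam ($A_6$), $N=6$: $F_{\mathbf c,\mathbf s}=x^7+c_1x^5+c_2x^4+c_3x^3+s_2x^2+s_1x+\tfrac12y^2-s_2y$, $\mathbf f_{\mathbf c}(x,y)=(-2xy-3c_3x^2-4c_2x^3-5c_1x^4-7x^6,\,y)$. (9) Symbolic umbilic ($E_6$), $N=6$: $F_{\mathbf c,\mathbf s}=x^3+y^4+c_1xy^2+c_2xy+c_3y^2+s_2y+s_1x$, $\mathbf f_{\mathbf c}(x,y)=(-3x^2-c_1y^2-c_2y,\,-4y^3-2c_1xy-c_2x-2c_3y)$. (10) $2^{\rm nd}$ elliptic umbilic ($D_6^-$), $N=6$: $F_{\mathbf c,\mathbf s}=x^2y-y^5+c_1y^4+c_2y^3+c_3y^2+s_2y+s_1x$, $\mathbf f_{\mathbf c}(x,y)=(-2xy,\,-x^2+5y^4-4c_1y^3-3c_2y^2-2c_3y)$. (11) $2^{\rm nd}$ hyperbolic umbilic ($D_6^+$), $N=6$: $F_{\mathbf c,\mathbf s}=x^2y+y^5+c_1y^4+c_2y^3+c_3y^2+s_2y+s_1x$, $\mathbf f_{\mathbf c}(x,y)=(-2xy,\,-x^2-5y^4-4c_1y^3-3c_2y^2-2c_3y)$.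 For any of these families, any parameter value $\mathbf c$, and any non-caustic point $\mathbf s$ lying in the region of the target plane giving rise to the maximum number $N$ of real pre-images $\mathbf x_1,\dots,\mathbf x_N$ (i.e. critical points of $F_{\mathbf c,\mathbf s}$), the magnifications $\mathfrak M_i=\mathfrak M(\mathbf x_i;\mathbf s)$ satisfy $$\sum_{i=1}^{N}\mathfrak M_i=0.$$
   Context: For each family, a critical point $\mathbf x_0$ of $F_{\mathbf c,\mathbf s}$ (i.e. $\operatorname{grad}F_{\mathbf c,\mathbf s}(\mathbf x_0)=\mathbf 0$) is the same as a pre-image of $\mathbf s$ under $\mathbf f_{\mathbf c}$, i.e. $\mathbf f_{\mathbf c}(\mathbf x_0)=\mathbf s$. The magnification at such a point is $\mathfrak M(\mathbf x_0;\mathbf s)=1/\mathrm{Gauss}(\mathbf x_0,F_{\mathbf c,\mathbf s}(\mathbf x_0))$, the reciprocal of the Gaussian curvature of the graph of $F_{\mathbf c,\mathbf s}$ at that point; this equals $1/\det(\operatorname{Hess}F_{\mathbf c,\mathbf s})(\mathbf x_0)=1/\det(\operatorname{Jac}\mathbf f_{\mathbf c})(\mathbf x_0)$. A caustic point is a target point $\mathbf s$ that is the image under $\mathbf f_{\mathbf c}$ of a point where $\det(\operatorname{Jac}\mathbf f_{\mathbf c})=0$; a non-caustic point is one that is not caustic, so all its magnifications are finite. *)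

From Stdlib Require Import Reals List.
From Coquelicot Require Import Coquelicot.
Import ListNotations.
Open Scope R_scope.

Inductive catastrophe : Type :=
  | Fold | Cusp | Swallowtail | EllipticUmbilic | HyperbolicUmbilic
  | Butterfly | ParabolicUmbilic | Wigwam | SymbolicUmbilic
  | EllipticUmbilic2 | HyperbolicUmbilic2.

Definition Nmax (fam : catastrophe) : nat :=
  match fam with
  | Fold => 2 | Cusp => 3
  | Swallowtail | EllipticUmbilic | HyperbolicUmbilic => 4
  | Butterfly | ParabolicUmbilic => 5
  | Wigwam | SymbolicUmbilic | EllipticUmbilic2 | HyperbolicUmbilic2 => 6
  end.

(* The parameter vector c is given as (c1, c2, c3); families with fewer
   parameters ignore the unused components (families with a single
   parameter c use c1). *)

Definition Fpot (fam : catastrophe) (c1 c2 c3 s1 s2 x y : R) : R :=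
  match fam with
  | Fold => - s1 * x + s2 * y + /2 * x^2 - /3 * y^3
  | Cusp => - s1 * x + s2 * y + /2 * x^2 - /2 * s1 * y^2 - /4 * y^4
  | Swallowtail => s1 * x - s2 * y - /2 * s2 * x^2 + /2 * y^2 - /3 * c1 * x^3 - /5 * x^5
  | EllipticUmbilic => s1 * x + s2 * y + c1 * (x^2 + y^2) + x^3 - 3 * x * y^2
  | HyperbolicUmbilic => s1 * x + s2 * y + c1 * x * y + x^3 + y^3
  | Butterfly => x^6 + c1 * x^4 + c2 * x^3 + s2 * x^2 + s1 * x + /2 * y^2 - s2 * y
  | ParabolicUmbilic => x^2 * y + y^4 + c1 * x^2 + c2 * y^2 - s1 * x - s2 * y
  | Wigwam => x^7 + c1 * x^5 + c2 * x^4 + c3 * x^3 + s2 * x^2 + s1 * x + /2 * y^2 - s2 * y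
  | SymbolicUmbilic => x^3 + y^4 + c1 * x * y^2 + c2 * x * y + c3 * y^2 + s2 * y + s1 * x
  | EllipticUmbilic2 => x^2 * y - y^5 + c1 * y^4 + c2 * y^3 + c3 * y^2 + s2 * y + s1 * x
  | HyperbolicUmbilic2 => x^2 * y + y^5 + c1 * y^4 + c2 * y^3 + c3 * y^2 + s2 * y + s1 * x
  end.

Definition fmap1 (fam : catastrophe) (c1 c2 c3 x y : R) : R :=
  match fam with
  | Fold => x
  | Cusp => x
  | Swallowtail => x * y + c1 * x^2 + x^4
  | EllipticUmbilic => 3 * y^2 - 3 * x^2 - 2 * c1 * x
  | HyperbolicUmbilic => - 3 * x^2 - c1 * y
  | Butterfly => - 2 * x * y - 3 * c2 * x^2 - 4 * c1 * x^3 - 6 * x^5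
  | ParabolicUmbilic => 2 * c1 * x + 2 * x * y
  | Wigwam => - 2 * x * y - 3 * c3 * x^2 - 4 * c2 * x^3 - 5 * c1 * x^4 - 7 * x^6
  | SymbolicUmbilic => - 3 * x^2 - c1 * y^2 - c2 * y
  | EllipticUmbilic2 => - 2 * x * y
  | HyperbolicUmbilic2 => - 2 * x * y
  end.

Definition fmap2 (fam : catastrophe) (c1 c2 c3 x y : R) : R :=
  match fam with
  | Fold => y^2
  | Cusp => x * y + y^3
  | Swallowtail => y
  | EllipticUmbilic => 6 * x * y - 2 * c1 * y
  | HyperbolicUmbilic => - 3 * y^2 - c1 * x
  | Butterfly => y
  | ParabolicUmbilic => 2 * c2 * y + x^2 + 4 * y^3
  | Wigwam => y
  | SymbolicUmbilic => - 4 * y^3 - 2 * c1 * x * y - c2 * x - 2 * c3 * y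
  | EllipticUmbilic2 => - x^2 + 5 * y^4 - 4 * c1 * y^3 - 3 * c2 * y^2 - 2 * c3 * y
  | HyperbolicUmbilic2 => - x^2 - 5 * y^4 - 4 * c1 * y^3 - 3 * c2 * y^2 - 2 * c3 * y
  end.

Definition fmap (fam : catastrophe) (c1 c2 c3 : R) (p : R * R) : R * R :=
  (fmap1 fam c1 c2 c3 (fst p) (snd p), fmap2 fam c1 c2 c3 (fst p) (snd p)).

Definition jacdet (fam : catastrophe) (c1 c2 c3 : R) (p : R * R) : R :=
  let x := fst p in let y := snd p in
  Derive (fun t => fmap1 fam c1 c2 c3 t y) x * Derive (fun t => fmap2 fam c1 c2 c3 x t) y
  - Derive (fun t => fmap1 fam c1 c2 c3 x t) y * Derive (fun t => fmap2 fam c1 c2 c3 t y) x.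

Definition magnification (fam : catastrophe) (c1 c2 c3 : R) (p : R * R) : R :=
  / jacdet fam c1 c2 c3 p.

Definition caustic (fam : catastrophe) (c1 c2 c3 : R) (s : R * R) : Prop :=
  exists p, fmap fam c1 c2 c3 p = s /\ jacdet fam c1 c2 c3 p = 0.

Definition sumR (l : list R) : R := fold_right Rplus 0 l.

From Stdlib Require Import Reals List.
From Coquelicot Require Import Coquelicot.
From Stdlib Require Import Lra Lia Permutation.
Import ListNotations.
Open Scope R_scope.

(* For each family one coordinate t of a pre-image determines the pre-image, and
   eliminating the other coordinate shows that t is a root of a polynomial P of degree N in t
   whose coefficients depend on s, while the Jacobian at the pre-image is P'(t) / g(t) for a
   polynomial g of degree at most N - 2.  The magnifications are then the values g(t_i) / P'(t_i)
   over the N distinct roots t_i of P, and their sum is the divided difference g[t_1, ..., t_N]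
   divided by the leading coefficient of P; it vanishes because deg g < N - 1.
   Where the elimination degenerates (s on an axis of symmetry), two pre-images share the same
   t = r0 and together contribute g(r0) / P'(r0), so r0 plays the role of the missing root.  The
   fold, the hyperbolic umbilic with c = 0 and the symbolic umbilic with c1 = c2 = 0 are instead
   handled by a symmetry of the map that reverses the sign of the Jacobian. *)

Lemma sumR_app l l' : sumR (l ++ l') = sumR l + sumR l'.
Proof. induction l as [|a l IH]; simpl; [ring|rewrite IH; ring]. Qed.

Lemma sumR_perm l l' : Permutation l l' -> sumR l = sumR l'.
Proof. induction 1; simpl; lra. Qed.

Lemma sumR_map_ext_in {A : Type} (F G : A -> R) l :
  (forall a, In a l -> F a = G a) -> sumR (map F l) = sumR (map G l).
Proof. intros H. now rewrite (map_ext_in F G l H). Qed.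

Lemma sumR_map_plus {A : Type} (F G : A -> R) l :
  sumR (map (fun a => F a + G a) l) = sumR (map F l) + sumR (map G l).
Proof. induction l as [|a l IH]; simpl; [ring|rewrite IH; ring]. Qed.

Lemma sumR_map_scal {A : Type} (c : R) (F : A -> R) l :
  sumR (map (fun a => c * F a) l) = c * sumR (map F l).
Proof. induction l as [|a l IH]; simpl; [ring|rewrite IH; ring]. Qed.

Lemma sumR_map_filter {A : Type} (F : A -> R) (b : A -> bool) l :
  sumR (map F l) = sumR (map F (filter b l)) + sumR (map F (filter (fun a => negb (b a)) l)).
Proof. induction l as [|a l IH]; simpl; [ring|]. destruct (b a); simpl; rewrite IH; ring. Qed.

(** * Polynomials as coefficient lists *)

Fixpoint peval (p : list R) (y : R) : R :=
  match p with [] => 0 | a :: q => a + y * peval q y end.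

Fixpoint peval_deriv (p : list R) (y : R) : R :=
  match p with [] => 0 | _ :: q => peval q y + y * peval_deriv q y end.

Fixpoint pdiv_lin (r : R) (p : list R) : list R :=
  match p with
  | [] => []
  | _ :: q => match q with [] => [] | _ :: _ => peval q r :: pdiv_lin r q end
  end.

Definition prodR (l : list R) : R := fold_right Rmult 1 l.

Lemma peval_pdiv_lin r p y :
  peval p y = (y - r) * peval (pdiv_lin r p) y + peval p r.
Proof.
  induction p as [|a q IH]; simpl; [ring|].
  destruct q as [|b q']; simpl; [ring|].
  simpl in IH. rewrite IH. ring.
Qed.

Lemma peval_deriv_pdiv_lin r p y :
  peval_deriv p y = peval (pdiv_lin r p) y + (y - r) * peval_deriv (pdiv_lin r p) y.
Proof.
  induction p as [|a q IH]; simpl; [ring|].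
  destruct q as [|b q']; [simpl; ring|].
  rewrite (peval_pdiv_lin r (b :: q') y) at 1. cbn [pdiv_lin peval_deriv peval] in *.
  rewrite IH. ring.
Qed.

Lemma length_pdiv_lin r p : length (pdiv_lin r p) = pred (length p).
Proof.
  induction p as [|a q IH]; [reflexivity|].
  destruct q as [|b q']; [reflexivity|]. simpl in *. now rewrite IH.
Qed.

Lemma last_pdiv_lin r p : (1 < length p)%nat -> last (pdiv_lin r p) 0 = last p 0.
Proof.
  induction p as [|a q IH]; simpl; [lia|]. intros Hlen.
  destruct q as [|b [|c q'']]; simpl in *; [lia|ring|].
  rewrite <- IH by (simpl; lia). reflexivity.
Qed.

Lemma pdiv_lin_root r s p :
  peval p r = 0 -> peval p s = 0 -> s <> r -> peval (pdiv_lin r p) s = 0.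
Proof.
  intros Hr Hs Hsr. pose proof (peval_pdiv_lin r p s) as E.
  rewrite Hr, Hs, Rplus_0_r in E. symmetry in E.
  apply Rmult_integral in E as [E|E]; [lra|exact E].
Qed.

Lemma roots_lt_length p rs :
  NoDup rs -> (forall r, In r rs -> peval p r = 0) -> last p 0 <> 0 ->
  (length rs < length p)%nat.
Proof.
  revert p; induction rs as [|r rs IH]; intros p Hnd Hroot Hlast.
  - destruct p; [contradiction|simpl; lia].
  - apply NoDup_cons_iff in Hnd as [Hr Hnd].
    destruct p as [|a [|b q]]; [contradiction| |].
    + specialize (Hroot r (or_introl eq_refl)). simpl in *. lra.
    + assert (Hq : (length rs < length (pdiv_lin r (a :: b :: q)))%nat).
      { apply IH; [assumption| |rewrite last_pdiv_lin by (simpl; lia); assumption].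
        intros s Hs. apply pdiv_lin_root; auto with datatypes.
        intros ->. contradiction. }
      rewrite length_pdiv_lin in Hq. simpl in *. lia.
Qed.

Fixpoint picks {A : Type} (l : list A) : list (A * list A) :=
  match l with
  | [] => []
  | a :: l' => (a, l') :: map (fun '(b, o) => (b, a :: o)) (picks l')
  end.

Lemma map_fst_picks {A : Type} (l : list A) : map fst (picks l) = l.
Proof.
  induction l as [|a l IH]; [reflexivity|]. simpl. f_equal.
  rewrite map_map. rewrite <- IH at 2. apply map_ext. now intros [b o].
Qed.

Lemma in_picks {A : Type} (l : list A) a o : In (a, o) (picks l) -> In a l.
Proof. intros H. rewrite <- map_fst_picks. now apply in_map_iff; exists (a, o). Qed.

Lemma peval_root_factor p rs :
  NoDup rs -> length p = S (length rs) -> (forall r, In r rs -> peval p r = 0) ->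
  forall y, peval p y = last p 0 * prodR (map (Rminus y) rs).
Proof.
  revert p; induction rs as [|r rs IH]; intros p Hnd Hlen Hroot y.
  - destruct p as [|a [|]]; simpl in *; try lia. ring.
  - apply NoDup_cons_iff in Hnd as [Hr Hnd].
    rewrite (peval_pdiv_lin r p y), (Hroot r) by (left; reflexivity).
    rewrite (IH (pdiv_lin r p)), last_pdiv_lin.
    + simpl. ring.
    + simpl in Hlen; lia.
    + assumption.
    + rewrite length_pdiv_lin, Hlen. reflexivity.
    + intros s Hs. apply pdiv_lin_root; auto with datatypes. intros ->. contradiction.
Qed.

Lemma peval_deriv_at_root p rs :
  NoDup rs -> length p = S (length rs) -> (forall r, In r rs -> peval p r = 0) ->
  forall r o, In (r, o) (picks rs) -> peval_deriv p r = last p 0 * prodR (map (Rminus r) o).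
Proof.
  revert p; induction rs as [|r rs IH]; intros p Hnd Hlen Hroot s o Hin; [destruct Hin|].
  apply NoDup_cons_iff in Hnd as [Hr Hnd].
  assert (Hq : forall s, In s rs -> peval (pdiv_lin r p) s = 0).
  { intros s' Hs. apply pdiv_lin_root; auto with datatypes. intros ->. contradiction. }
  assert (Hqlen : length (pdiv_lin r p) = S (length rs))
    by (rewrite length_pdiv_lin, Hlen; reflexivity).
  assert (Hqlast : last (pdiv_lin r p) 0 = last p 0) by (apply last_pdiv_lin; simpl in Hlen; lia).
  rewrite (peval_deriv_pdiv_lin r p s).
  destruct Hin as [[= <- <-]|Hin].
  - rewrite (peval_root_factor _ rs), Hqlast by assumption. simpl. ring.
  - apply in_map_iff in Hin as [[s' o'] [[= <- <-] Hin]].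
    rewrite (IH _ Hnd Hqlen Hq s' o' Hin), Hqlast, (Hq s') by exact (in_picks _ _ _ Hin).
    simpl. ring.
Qed.

(** * Divided differences *)

Lemma sumR_map_picks_cons {A : Type} (G : A * list A -> R) a l :
  sumR (map G (picks (a :: l))) = G (a, l) + sumR (map (fun x => G (fst x, a :: snd x)) (picks l)).
Proof.
  simpl. rewrite map_map. do 2 f_equal. apply map_ext. now intros [b o].
Qed.

Definition dd_term (f : R -> R) (x : R * list R) : R :=
  f (fst x) / prodR (map (Rminus (fst x)) (snd x)).

Definition divided_difference (f : R -> R) (rs : list R) : R :=
  sumR (map (dd_term f) (picks rs)).

Lemma dd_term_cons f r c o : dd_term f (r, c :: o) = dd_term f (r, o) / (r - c).
Proof. unfold dd_term, Rdiv. simpl. rewrite Rinv_mult. ring. Qed.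

Lemma divided_difference_ext f g rs :
  (forall y, f y = g y) -> divided_difference f rs = divided_difference g rs.
Proof.
  intros H. unfold divided_difference, dd_term. f_equal. apply map_ext. intros x. now rewrite H.
Qed.

Lemma divided_difference_cons_cons f a b rs :
  NoDup (a :: b :: rs) ->
  divided_difference f (a :: b :: rs)
  = (divided_difference f (a :: rs) - divided_difference f (b :: rs)) / (a - b).
Proof.
  intros Hnd. apply NoDup_cons_iff in Hnd as [Ha Hnd]. apply NoDup_cons_iff in Hnd as [Hb _].
  assert (Hab : a - b <> 0) by (intro; apply Ha; left; lra).
  unfold divided_difference. rewrite !sumR_map_picks_cons. cbn [fst snd].
  rewrite (sumR_map_ext_in (fun x => dd_term f (fst x, a :: b :: snd x))
    (fun x => / (a - b) * dd_term f (fst x, a :: snd x)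
              + - / (a - b) * dd_term f (fst x, b :: snd x))).
  - rewrite sumR_map_plus, !sumR_map_scal, !dd_term_cons. field. split; lra.
  - intros [r o] Hin. apply in_picks in Hin. simpl. rewrite !dd_term_cons.
    assert (r - a <> 0) by (intro; apply Ha; right; replace a with r by lra; assumption).
    assert (r - b <> 0) by (intro; apply Hb; replace b with r by lra; assumption).
    unfold Rdiv. generalize (dd_term f (r, o)); intro u. field. auto.
Qed.

Lemma divided_difference_one a b rs :
  NoDup (a :: b :: rs) -> divided_difference (fun _ => 1) (a :: b :: rs) = 0.
Proof.
  revert a b; induction rs as [|c rs IH]; intros a b Hnd;
    rewrite divided_difference_cons_cons by assumption.
  - unfold divided_difference, dd_term. simpl. field.
    intro; apply NoDup_cons_iff in Hnd as [Ha _]; apply Ha; left; lra.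
  - rewrite !IH; [unfold Rdiv; ring| |].
    + apply NoDup_cons_iff in Hnd as [_ Hnd]. exact Hnd.
    + inversion Hnd as [|? ? Ha Hnd']. inversion Hnd'.
      constructor; [intro; apply Ha; simpl in *; tauto|assumption].
Qed.

Lemma divided_difference_horner c h a rs :
  NoDup (a :: rs) ->
  divided_difference (fun y => c + (y - a) * h y) (a :: rs)
  = c * divided_difference (fun _ => 1) (a :: rs) + divided_difference h rs.
Proof.
  intros Hnd. apply NoDup_cons_iff in Hnd as [Ha _].
  unfold divided_difference. rewrite !sumR_map_picks_cons.
  rewrite (sumR_map_ext_in _ (fun x => c * dd_term (fun _ => 1) (fst x, a :: snd x) + dd_term h x)).
  - rewrite sumR_map_plus, sumR_map_scal. unfold dd_term. simpl. unfold Rdiv. ring.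
  - intros [r o] Hin. apply in_picks in Hin. rewrite !dd_term_cons.
    assert (r - a <> 0) by (intro; apply Ha; replace a with r by lra; assumption).
    unfold dd_term, Rdiv. simpl. generalize (/ prodR (map (Rminus r) o)); intro u.
    field. assumption.
Qed.

Lemma divided_difference_peval p rs :
  NoDup rs -> (length p < length rs)%nat -> divided_difference (peval p) rs = 0.
Proof.
  revert p; induction rs as [|a rs IH]; intros p Hnd Hlen; [simpl in Hlen; lia|].
  destruct rs as [|b rs].
  - destruct p; [|simpl in Hlen; lia]. unfold divided_difference, dd_term. simpl. unfold Rdiv. ring.
  - rewrite (divided_difference_ext _ (fun y => peval p a + (y - a) * peval (pdiv_lin a p) y))
      by (intro y; rewrite (peval_pdiv_lin a p y); ring).
    rewrite divided_difference_horner, divided_difference_one, IH by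
      (try assumption; try (apply NoDup_cons_iff in Hnd as [_ Hnd]; exact Hnd);
       rewrite length_pdiv_lin; simpl in *; lia).
    ring.
Qed.

(* If the leading coefficient of [p] vanishes then so does every [peval_deriv p r], and the
   statement holds through [x / 0 = 0]. *)
Theorem sum_div_peval_deriv_roots p g rs :
  NoDup rs -> length p = S (length rs) -> (length g < length rs)%nat ->
  (forall r, In r rs -> peval p r = 0) ->
  sumR (map (fun r => peval g r / peval_deriv p r) rs) = 0.
Proof.
  intros Hnd Hlen Hg Hroot.
  rewrite <- (map_fst_picks rs) at 1. rewrite map_map.
  rewrite (sumR_map_ext_in _ (fun x => / last p 0 * dd_term (peval g) x)).
  - rewrite sumR_map_scal. fold (divided_difference (peval g) rs).
    rewrite divided_difference_peval by assumption. ring.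
  - intros [r o] Hin. cbn [fst].
    rewrite (peval_deriv_at_root p rs Hnd Hlen Hroot r o Hin).
    unfold dd_term, Rdiv. simpl. rewrite Rinv_mult. ring.
Qed.

(** * Sums over the pre-images *)

Section PreimageSums.

Context {A : Type} (F : A -> R).

Lemma NoDup_map_in (t : A -> R) l :
  NoDup l -> (forall a b, In a l -> In b l -> t a = t b -> a = b) -> NoDup (map t l).
Proof. intros Hnd Hinj. apply NoDup_map_NoDup_ForallPairs; [exact Hinj|exact Hnd]. Qed.

Lemma sumR_injective_roots_app l (t : A -> R) p g extra :
  NoDup (map t l ++ extra) -> length p = S (length l + length extra) ->
  (length g < length l + length extra)%nat ->
  (forall a, In a l -> peval p (t a) = 0) -> (forall r, In r extra -> peval p r = 0) ->
  (forall a, In a l -> F a = peval g (t a) / peval_deriv p (t a)) ->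
  sumR (map F l) + sumR (map (fun r => peval g r / peval_deriv p r) extra) = 0.
Proof.
  intros Hnd Hlen Hg Hroot Hextra HF.
  rewrite (sumR_map_ext_in _ _ _ HF), <- (map_map t (fun r => peval g r / peval_deriv p r)).
  rewrite <- sumR_app, <- map_app.
  apply sum_div_peval_deriv_roots; rewrite ?length_app, ?length_map; try assumption.
  intros r Hr. apply in_app_or in Hr as [Hr|Hr]; [|auto].
  apply in_map_iff in Hr as [a [<- Ha]]. auto.
Qed.

Lemma sumR_injective_roots l (t : A -> R) p g :
  NoDup l -> length p = S (length l) -> (length g < length l)%nat ->
  (forall a b, In a l -> In b l -> t a = t b -> a = b) ->
  (forall a, In a l -> peval p (t a) = 0) ->
  (forall a, In a l -> F a = peval g (t a) / peval_deriv p (t a)) ->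
  sumR (map F l) = 0.
Proof.
  intros Hnd Hlen Hg Hinj Hroot HF.
  rewrite <- (Rplus_0_r (sumR (map F l))).
  apply (sumR_injective_roots_app l t p g []); rewrite ?app_nil_r; simpl; rewrite ?Nat.add_0_r;
    try assumption; [now apply NoDup_map_in|contradiction].
Qed.

Definition lies_over (t : A -> R) (r0 : R) (a : A) : bool :=
  if Req_dec_T (t a) r0 then true else false.

Lemma in_filter_lies_over t r0 l a : In a (filter (lies_over t r0) l) <-> In a l /\ t a = r0.
Proof.
  rewrite filter_In. unfold lies_over. destruct (Req_dec_T (t a) r0); intuition discriminate.
Qed.

Lemma in_filter_not_lies_over t r0 l a :
  In a (filter (fun a => negb (lies_over t r0 a)) l) <-> In a l /\ t a <> r0.
Proof.
  rewrite filter_In. unfold lies_over. destruct (Req_dec_T (t a) r0); intuition discriminate.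
Qed.

Section DoubleFibre.

Variables (l : list A) (t u : A -> R) (p q g : list R) (r0 : R).
Hypothesis l_uniq : NoDup l.
Hypothesis t_inj_off : forall a b, In a l -> In b l -> t a = t b -> t a <> r0 -> a = b.
Hypothesis t_roots : forall a, In a l -> peval p (t a) = 0.
Hypothesis r0_root : peval p r0 = 0.

Let off := filter (fun a => negb (lies_over t r0 a)) l.

Lemma NoDup_off_fibre_roots : NoDup (map t off ++ [r0]).
Proof.
  apply NoDup_app; [apply NoDup_map_in; [now apply NoDup_filter|]| |].
  - intros a b [Ha Ha']%in_filter_not_lies_over [Hb _]%in_filter_not_lies_over; auto.
  - repeat constructor; auto.
  - intros r [a [<- [_ Ha]%in_filter_not_lies_over]]%in_map_iff [Hr|[]]; auto.
Qed.

Lemma length_off_fibre : last p 0 <> 0 -> (length off + 1 < length p)%nat.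
Proof.
  intros Hp. replace (length off + 1)%nat with (length (map t off ++ [r0]))
    by (rewrite length_app, length_map; reflexivity).
  apply roots_lt_length; [exact NoDup_off_fibre_roots| |assumption].
  intros r [[a [<- [Ha _]%in_filter_not_lies_over]]%in_map_iff|[<-|[]]]%in_app_or; auto.
Qed.

Lemma length_fibre :
  last q 0 <> 0 -> (forall a b, t a = t b -> u a = u b -> a = b) ->
  (forall a, In a l -> t a = r0 -> peval q (u a) = 0) ->
  (length (filter (lies_over t r0) l) < length q)%nat.
Proof.
  intros Hq Htu Hfibre. rewrite <- (length_map u). apply roots_lt_length; [|intros r|assumption].
  - apply NoDup_map_in; [now apply NoDup_filter|].
    intros a b [_ Ha]%in_filter_lies_over [_ Hb]%in_filter_lies_over. apply Htu. congruence.
  - intros [a [<- [Ha Hat]%in_filter_lies_over]]%in_map_iff. auto.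
Qed.

(* The two points over [r0] jointly stand in for the root [r0] of [p] that no point of the
   off-fibre part reaches. *)
Lemma sumR_roots_double_fibre :
  length p = length l -> (S (length g) < length l)%nat -> last p 0 <> 0 ->
  (length q <= 3)%nat -> last q 0 <> 0 ->
  (forall a b, t a = t b -> u a = u b -> a = b) ->
  (forall a, In a l -> t a = r0 -> peval q (u a) = 0) ->
  (forall a, In a l -> t a <> r0 -> F a = peval g (t a) / peval_deriv p (t a)) ->
  (forall a b, In a l -> In b l -> t a = r0 -> t b = r0 -> a <> b ->
     F a + F b = peval g r0 / peval_deriv p r0) ->
  sumR (map F l) = 0.
Proof.
  intros Hlen Hg Hp Hq3 Hq Htu Hfibre HF Hpair.
  pose proof (length_off_fibre Hp) as Hoff. pose proof (length_fibre Hq Htu Hfibre) as Hon.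
  pose proof (filter_length (lies_over t r0) l) as Hsplit. fold off in Hsplit.
  pose proof (NoDup_filter (lies_over t r0) l_uniq) as Hnd.
  pose proof (fun a => proj1 (in_filter_lies_over t r0 l a)) as Hin.
  rewrite (sumR_map_filter F (lies_over t r0)). fold off.
  destruct (filter (lies_over t r0) l) as [|b1 [|b2 [|]]]; simpl in Hon, Hsplit; try lia.
  destruct (Hin b1) as [Hb1 Hb1']; [simpl; auto|]. destruct (Hin b2) as [Hb2 Hb2']; [simpl; auto|].
  apply NoDup_cons_iff in Hnd as [Hb12 _].
  cbn [map sumR fold_right]. rewrite Rplus_0_r, Hpair by (auto; intros ->; simpl in Hb12; tauto).
  rewrite Rplus_comm.
  replace (peval g r0 / peval_deriv p r0)
    with (sumR (map (fun r => peval g r / peval_deriv p r) [r0])) by (simpl; ring).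
  apply (sumR_injective_roots_app _ t); simpl; try lia; try exact NoDup_off_fibre_roots.
  - intros a [Ha _]%in_filter_not_lies_over. auto.
  - intros r [<-|[]]. assumption.
  - intros a [Ha Ha']%in_filter_not_lies_over. auto.
Qed.

End DoubleFibre.

Lemma sumR_map_odd_involution l (s : A -> A) :
  NoDup l -> (forall a, In a l -> In (s a) l) -> (forall a, s (s a) = a) ->
  (forall a, In a l -> F (s a) = - F a) -> sumR (map F l) = 0.
Proof.
  intros Hnd Hin Hss HF.
  assert (Hperm : Permutation l (map s l)).
  { apply NoDup_Permutation_bis; [assumption|rewrite length_map; lia|].
    intros a Ha. rewrite <- (Hss a). apply in_map, Hin, Ha. }
  assert (E : sumR (map F l) = -1 * sumR (map F l)).
  { rewrite (sumR_perm _ _ (Permutation_map F Hperm)) at 1.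
    rewrite map_map, <- sumR_map_scal. apply sumR_map_ext_in.
    intros a Ha. rewrite HF by assumption. ring. }
  lra.
Qed.

End PreimageSums.

(** * The catastrophes *)

(* Polynomial arithmetic, used only to write down the eliminants below; [simpl] computes them. *)
Fixpoint padd (p q : list R) : list R :=
  match p, q with
  | [], _ => q
  | _, [] => p
  | a :: p', b :: q' => (a + b) :: padd p' q'
  end.

Definition pscale (c : R) (p : list R) : list R := map (Rmult c) p.

Fixpoint pmul (p q : list R) : list R :=
  match p with [] => [] | a :: p' => padd (pscale a q) (0 :: pmul p' q) end.

Definition jac (fam : catastrophe) (c1 c2 c3 x y : R) : R :=
  match fam with
  | Fold => 2 * y
  | Cusp => x + 3 * y^2
  | Swallowtail => y + 2 * c1 * x + 4 * x^3
  | EllipticUmbilic => 4 * c1^2 - 36 * x^2 - 36 * y^2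
  | HyperbolicUmbilic => 36 * x * y - c1^2
  | Butterfly => - 2 * y - 6 * c2 * x - 12 * c1 * x^2 - 30 * x^4
  | ParabolicUmbilic => 4 * (c1 + y) * (c2 + 6 * y^2) - 4 * x^2
  | Wigwam => - 2 * y - 6 * c3 * x - 12 * c2 * x^2 - 20 * c1 * x^3 - 42 * x^5
  | SymbolicUmbilic => 6 * x * (12 * y^2 + 2 * c1 * x + 2 * c3) - (2 * c1 * y + c2)^2
  | EllipticUmbilic2 => - 4 * x^2 - 4 * y * (10 * y^3 - 6 * c1 * y^2 - 3 * c2 * y - c3)
  | HyperbolicUmbilic2 => - 4 * x^2 + 4 * y * (10 * y^3 + 6 * c1 * y^2 + 3 * c2 * y + c3)
  end.

Lemma jacdet_eq fam c1 c2 c3 x y : jacdet fam c1 c2 c3 (x, y) = jac fam c1 c2 c3 x y.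
Proof.
  unfold jacdet; destruct fam; cbn [fst snd fmap1 fmap2 jac];
  repeat match goal with |- context [Derive ?f ?t] =>
    let H := fresh in
    assert (H : is_derive f t _) by (auto_derive; [auto|reflexivity]);
    rewrite (is_derive_unique f t _ H); clear H end;
  ring.
Qed.

Definition magnification_sum_vanishes (fam : catastrophe) : Prop :=
  forall c1 c2 c3 s1 s2 (pts : list (R * R)),
    ~ caustic fam c1 c2 c3 (s1, s2) -> NoDup pts -> length pts = Nmax fam ->
    (forall p, fmap fam c1 c2 c3 p = (s1, s2) <-> In p pts) ->
    sumR (map (magnification fam c1 c2 c3) pts) = 0.

Lemma preimage_facts fam c1 c2 c3 s1 s2 pts x y :
  ~ caustic fam c1 c2 c3 (s1, s2) -> (forall p, fmap fam c1 c2 c3 p = (s1, s2) <-> In p pts) ->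
  In (x, y) pts ->
  fmap1 fam c1 c2 c3 x y = s1 /\ fmap2 fam c1 c2 c3 x y = s2 /\ jac fam c1 c2 c3 x y <> 0.
Proof.
  intros Hc Hpre Hp. apply Hpre in Hp as Hf. injection Hf as E1 E2.
  repeat split; [assumption|assumption|].
  intros J. apply Hc. exists (x, y). rewrite jacdet_eq. split; [apply Hpre|]; assumption.
Qed.

Tactic Notation "preimage" constr(Hp) "as" ident(E1) ident(E2) ident(J) :=
  match goal with Hc : ~ caustic _ _ _ _ _, Hpre : forall p, _ <-> In p _ |- _ =>
    destruct (preimage_facts _ _ _ _ _ _ _ _ _ Hc Hpre Hp) as (E1 & E2 & J);
    cbn [fmap1 fmap2 jac] in E1, E2, J end.

Lemma magnification_eq fam c1 c2 c3 x y :
  magnification fam c1 c2 c3 (x, y) = / jac fam c1 c2 c3 x y.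
Proof. unfold magnification. now rewrite jacdet_eq. Qed.

Lemma magnification_div fam c1 c2 c3 x y G D :
  jac fam c1 c2 c3 x y <> 0 -> G <> 0 -> D = G * jac fam c1 c2 c3 x y ->
  magnification fam c1 c2 c3 (x, y) = G / D.
Proof. intros HJ HG ->. rewrite magnification_eq. field. auto. Qed.

Lemma magnification_sum_cusp : magnification_sum_vanishes Cusp.
Proof.
  intros c1 c2 c3 s1 s2 pts Hc Hnd Hlen Hpre; simpl in Hlen.
  apply (sumR_injective_roots _ pts snd [-s2; s1; 0; 1] [1]); simpl; try lia; try assumption.
  - intros [x y] [x' y'] Hp Hq; simpl; intros <-.
    preimage Hp as E1 E2 J. preimage Hq as E1' E2' J'. congruence.
  - intros [x y] Hp. preimage Hp as E1 E2 J. simpl. subst. ring.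
  - intros [x y] Hp. preimage Hp as E1 E2 J.
    apply magnification_div; simpl; [assumption|lra|subst; ring].
Qed.

Lemma magnification_sum_swallowtail : magnification_sum_vanishes Swallowtail.
Proof.
  intros c1 c2 c3 s1 s2 pts Hc Hnd Hlen Hpre; simpl in Hlen.
  apply (sumR_injective_roots _ pts fst [-s1; s2; c1; 0; 1] [1]); simpl; try lia; try assumption.
  - intros [x y] [x' y'] Hp Hq; simpl; intros <-.
    preimage Hp as E1 E2 J. preimage Hq as E1' E2' J'. congruence.
  - intros [x y] Hp. preimage Hp as E1 E2 J. simpl. subst. ring.
  - intros [x y] Hp. preimage Hp as E1 E2 J.
    apply magnification_div; simpl; [assumption|lra|subst; ring].
Qed.

Lemma magnification_sum_butterfly : magnification_sum_vanishes Butterfly.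
Proof.
  intros c1 c2 c3 s1 s2 pts Hc Hnd Hlen Hpre; simpl in Hlen.
  apply (sumR_injective_roots _ pts fst [-s1; -2*s2; -3*c2; -4*c1; 0; -6] [1]);
    simpl; try lia; try assumption.
  - intros [x y] [x' y'] Hp Hq; simpl; intros <-.
    preimage Hp as E1 E2 J. preimage Hq as E1' E2' J'. congruence.
  - intros [x y] Hp. preimage Hp as E1 E2 J. simpl. subst. ring.
  - intros [x y] Hp. preimage Hp as E1 E2 J.
    apply magnification_div; simpl; [assumption|lra|subst; ring].
Qed.

Lemma magnification_sum_wigwam : magnification_sum_vanishes Wigwam.
Proof.
  intros c1 c2 c3 s1 s2 pts Hc Hnd Hlen Hpre; simpl in Hlen.
  apply (sumR_injective_roots _ pts fst [-s1; -2*s2; -3*c3; -4*c2; -5*c1; 0; -7] [1]);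
    simpl; try lia; try assumption.
  - intros [x y] [x' y'] Hp Hq; simpl; intros <-.
    preimage Hp as E1 E2 J. preimage Hq as E1' E2' J'. congruence.
  - intros [x y] Hp. preimage Hp as E1 E2 J. simpl. subst. ring.
  - intros [x y] Hp. preimage Hp as E1 E2 J.
    apply magnification_div; simpl; [assumption|lra|subst; ring].
Qed.

Lemma magnification_sum_fold : magnification_sum_vanishes Fold.
Proof.
  intros c1 c2 c3 s1 s2 pts Hc Hnd Hlen Hpre.
  apply (sumR_map_odd_involution _ pts (fun p => (fst p, - snd p)));
    [assumption| |now intros [x y]; simpl; rewrite Ropp_involutive|].
  - intros [x y] Hp. preimage Hp as E1 E2 J. apply Hpre. unfold fmap; simpl. f_equal; subst; ring.
  - intros [x y] Hp. preimage Hp as E1 E2 J. simpl. rewrite !magnification_eq. simpl. field. lra.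
Qed.

Lemma magnification_sum_hyperbolic_umbilic : magnification_sum_vanishes HyperbolicUmbilic.
Proof.
  intros c1 c2 c3 s1 s2 pts Hc Hnd Hlen Hpre; simpl in Hlen.
  destruct (Req_dec c1 0) as [->|Hc1].
  - apply (sumR_map_odd_involution _ pts (fun p => (- fst p, snd p)));
      [assumption| |now intros [x y]; simpl; rewrite Ropp_involutive|].
    + intros [x y] Hp. preimage Hp as E1 E2 J. apply Hpre. unfold fmap; simpl. f_equal; subst; ring.
    + intros [x y] Hp. preimage Hp as E1 E2 J. simpl. rewrite !magnification_eq. simpl. field.
      split; intros ->; apply J; ring.
  (* On the pre-images y = - (s1 + 3 x^2) / c1. *)
  - apply (sumR_injective_roots _ pts fst [3*s1^2 + c1^2*s2; c1^3; 18*s1; 0; 27] [-c1]); simpl;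
      try lia; try assumption.
    + intros [x y] [x' y'] Hp Hq; simpl; intros <-.
      preimage Hp as E1 E2 J. preimage Hq as E1' E2' J'.
      f_equal. apply (Rmult_eq_reg_l c1); [lra|assumption].
    + intros [x y] Hp. preimage Hp as E1 E2 J. simpl. subst. ring.
    + intros [x y] Hp. preimage Hp as E1 E2 J.
      apply magnification_div; simpl; [assumption|lra|subst; ring].
Qed.

Lemma magnification_sum_elliptic_umbilic : magnification_sum_vanishes EllipticUmbilic.
Proof.
  intros c1 c2 c3 s1 s2 pts Hc Hnd Hlen Hpre; simpl in Hlen.
  destruct (Req_dec s2 0) as [->|Hs2].
  (* On the axis s2 = 0 the pre-images lie on the lines y = 0 and x = c1 / 3. *)
  - apply (sumR_roots_double_fibre _ pts fst snd (pmul [-c1; 3] [s1; 2*c1; 3])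
      [-(s1 + c1^2); 0; 3] [-1/2] (c1/3)); simpl; try lia; try assumption; try (intro; lra).
    + intros [x y] [x' y'] Hp Hq; simpl; intros <- Hx.
      preimage Hp as E1 E2 J. preimage Hq as E1' E2' J'.
      assert (y = 0) by nra. assert (y' = 0) by nra. congruence.
    + intros [x y] Hp. preimage Hp as E1 E2 J. subst s1. simpl.
      assert (H : y * (3 * x - c1) = 0) by lra.
      transitivity (3 * y * (y * (3 * x - c1))); [ring|rewrite H; ring].
    + field.
    + intros [x y] [x' y']; simpl; intros -> ->; reflexivity.
    + intros [x y] Hp; simpl; intros ->. preimage Hp as E1 E2 J. subst s1. simpl. field.
    + intros [x y] Hp; simpl; intros Hx. preimage Hp as E1 E2 J.
      assert (y = 0) by nra. subst y s1. apply magnification_div; simpl; [assumption|lra|field].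
    + intros [x y] [x' y'] Hp Hq; simpl; intros -> -> Hne.
      preimage Hp as E1 E2 J. preimage Hq as E1' E2' J'.
      destruct (Rsqr_eq y' y) as [-> | ->]; [unfold Rsqr; lra|contradiction|].
      assert (Hy : y ^ 2 <> 0) by (intro Hy; apply J; nra).
      rewrite !magnification_eq. subst s1. cbn [jac]. field.
      split; intro E; apply Hy; ring_simplify in E; lra.
  (* Otherwise y = s2 / (2 (3 x - c1)). *)
  - apply (sumR_injective_roots _ pts fst
      (padd [3*s2^2/4] (pscale (-1) (pmul [s1; 2*c1; 3] (pmul [-c1; 3] [-c1; 3])))) [-c1/2; 3/2]);
      simpl; try lia; try assumption.
    + intros [x y] [x' y'] Hp Hq; simpl; intros <-.
      preimage Hp as E1 E2 J. preimage Hq as E1' E2' J'.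
      assert (Hk : 3 * x - c1 <> 0) by (intro; apply Hs2; rewrite <- E2; nra).
      f_equal. apply (Rmult_eq_reg_l (2 * (3 * x - c1))); [lra|]. lra.
    + intros [x y] Hp. preimage Hp as E1 E2 J. subst s1 s2. simpl. field.
    + intros [x y] Hp. preimage Hp as E1 E2 J.
      apply magnification_div; simpl; [assumption| |subst s1 s2; field].
      intro; apply Hs2; rewrite <- E2. nra.
Qed.

Lemma magnification_sum_parabolic_umbilic : magnification_sum_vanishes ParabolicUmbilic.
Proof.
  intros c1 c2 c3 s1 s2 pts Hc Hnd Hlen Hpre; simpl in Hlen.
  destruct (Req_dec s1 0) as [->|Hs1].
  (* On the axis s1 = 0 the pre-images lie on the lines x = 0 and y = - c1. *)
  - apply (sumR_roots_double_fibre _ pts snd fst (pmul [c1; 1] [-s2; 2*c2; 0; 4])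
      [-(s2 + 2*c1*c2 + 4*c1^3); 0; 1] [1/2] (-c1));
      simpl; try lia; try assumption; try (intro; lra).
    + intros [x y] [x' y'] Hp Hq; simpl; intros <- Hy.
      preimage Hp as E1 E2 J. preimage Hq as E1' E2' J'.
      assert (x = 0) by nra. assert (x' = 0) by nra. congruence.
    + intros [x y] Hp. preimage Hp as E1 E2 J. subst s2. simpl.
      assert (H : x * (c1 + y) = 0) by lra.
      transitivity (- x * (x * (c1 + y))); [ring|rewrite H; ring].
    + ring.
    + intros [x y] [x' y']; simpl; intros -> ->; reflexivity.
    + intros [x y] Hp; simpl; intros ->. preimage Hp as E1 E2 J. subst s2. simpl. ring.
    + intros [x y] Hp; simpl; intros Hy. preimage Hp as E1 E2 J.
      assert (x = 0) by nra. subst x s2. apply magnification_div; simpl; [assumption|lra|field].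
    + intros [x y] [x' y'] Hp Hq; simpl; intros -> -> Hne.
      preimage Hp as E1 E2 J. preimage Hq as E1' E2' J'.
      destruct (Rsqr_eq x' x) as [-> | ->]; [unfold Rsqr; lra|contradiction|].
      assert (Hx : x ^ 2 <> 0) by (intro Hx; apply J; nra).
      rewrite !magnification_eq. subst s2. cbn [jac]. field.
      split; intro E; apply Hx; ring_simplify in E; lra.
  (* Otherwise x = s1 / (2 (c1 + y)). *)
  - apply (sumR_injective_roots _ pts snd
      (padd [s1^2] (pscale (-4) (pmul (pmul [c1; 1] [c1; 1]) [s2; -2*c2; 0; -4]))) [2*c1; 2]);
      simpl; try lia; try assumption.
    + intros [x y] [x' y'] Hp Hq; simpl; intros <-.
      preimage Hp as E1 E2 J. preimage Hq as E1' E2' J'.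
      assert (Hk : c1 + y <> 0) by (intro; apply Hs1; rewrite <- E1; nra).
      f_equal. apply (Rmult_eq_reg_l (2 * (c1 + y))); [lra|]. lra.
    + intros [x y] Hp. preimage Hp as E1 E2 J. subst s1 s2. simpl. ring.
    + intros [x y] Hp. preimage Hp as E1 E2 J.
      apply magnification_div; simpl; [assumption| |subst s1 s2; ring].
      intro; apply Hs1; rewrite <- E1. nra.
Qed.

Section D6.

Variables (fam : catastrophe) (k : R).
Hypothesis k_neq0 : k <> 0.
Hypothesis fmap1_D6 : forall c1 c2 c3 x y, fmap1 fam c1 c2 c3 x y = - 2 * x * y.
Hypothesis fmap2_D6 : forall c1 c2 c3 x y,
  fmap2 fam c1 c2 c3 x y = - x^2 + k * y^4 - 4 * c1 * y^3 - 3 * c2 * y^2 - 2 * c3 * y.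
Hypothesis jac_D6 : forall c1 c2 c3 x y,
  jac fam c1 c2 c3 x y = - 4 * x^2 - 4 * y * (2 * k * y^3 - 6 * c1 * y^2 - 3 * c2 * y - c3).

Variables (c1 c2 c3 s1 s2 : R) (pts : list (R * R)).
Hypothesis Hc : ~ caustic fam c1 c2 c3 (s1, s2).
Hypothesis Hnd : NoDup pts.
Hypothesis Hlen : length pts = 6%nat.
Hypothesis Hpre : forall p, fmap fam c1 c2 c3 p = (s1, s2) <-> In p pts.

(* On the axis s1 = 0 the pre-images lie on the lines x = 0 and y = 0. *)
Lemma magnification_sum_D6_axis : s1 = 0 -> sumR (map (magnification fam c1 c2 c3) pts) = 0.
Proof.
  intros Hs1.
  apply (sumR_roots_double_fibre _ pts snd fst (pmul [0; 1] [-s2; -2*c3; -3*c2; -4*c1; k])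
    [s2; 0; 1] [-1/2] 0); simpl; try lia; try assumption; try (intro; lra).
  - intros [x y] [x' y'] Hp Hq; simpl; intros <- Hy.
    preimage Hp as E1 E2 J. preimage Hq as E1' E2' J'. rewrite fmap1_D6 in E1, E1'.
    assert (x = 0) by nra. assert (x' = 0) by nra. congruence.
  - intros [x y] Hp. preimage Hp as E1 E2 J. rewrite fmap1_D6, fmap2_D6 in *. subst s2. simpl.
    assert (H : x * y = 0) by lra.
    transitivity (x * (x * y)); [ring|rewrite H; ring].
  - ring.
  - intros [x y] [x' y']; simpl; intros -> ->; reflexivity.
  - intros [x y] Hp; simpl; intros ->. preimage Hp as E1 E2 J. rewrite fmap2_D6 in E2.
    subst s2. simpl. ring.
  - intros [x y] Hp; simpl; intros Hy.
    preimage Hp as E1 E2 J. rewrite fmap1_D6 in E1; rewrite fmap2_D6 in E2.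
    assert (x = 0) by nra. subst x s2.
    apply magnification_div; simpl; [assumption|lra|rewrite jac_D6; field].
  - intros [x y] [x' y'] Hp Hq; simpl; intros -> -> Hne.
    preimage Hp as E1 E2 J. preimage Hq as E1' E2' J'. rewrite fmap2_D6, jac_D6 in *.
    destruct (Rsqr_eq x' x) as [-> | ->]; [unfold Rsqr; lra|contradiction|].
    assert (Hx : x ^ 2 <> 0) by (intro Hx; apply J; nra).
    rewrite !magnification_eq, !jac_D6. subst s2. field.
    intros ->. apply Hx. ring.
Qed.

(* Off the axis x = - s1 / (2 y). *)
Lemma magnification_sum_D6_off_axis : s1 <> 0 -> sumR (map (magnification fam c1 c2 c3) pts) = 0.
Proof.
  intros Hs1.
  apply (sumR_injective_roots _ pts snd
    (padd [-s1^2/4] (pmul [0; 0; 1] [-s2; -2*c3; -3*c2; -4*c1; k])) [0; -1/2]);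
    simpl; try lia; try assumption.
  - intros [x y] [x' y'] Hp Hq; simpl; intros <-.
    preimage Hp as E1 E2 J. preimage Hq as E1' E2' J'. rewrite fmap1_D6 in E1, E1'.
    assert (Hy : y <> 0) by (intro; apply Hs1; rewrite <- E1; nra).
    f_equal. apply (Rmult_eq_reg_l (- 2 * y)); [lra|]. lra.
  - intros [x y] Hp. preimage Hp as E1 E2 J. rewrite fmap1_D6, fmap2_D6 in *.
    subst s1 s2. simpl. field.
  - intros [x y] Hp. preimage Hp as E1 E2 J. rewrite fmap1_D6 in E1; rewrite fmap2_D6 in E2.
    apply magnification_div; simpl; [assumption| |subst s1 s2; rewrite jac_D6; field].
    intro; apply Hs1; rewrite <- E1. nra.
Qed.

End D6.

Lemma magnification_sum_D6 fam k : k <> 0 -> Nmax fam = 6%nat ->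
  (forall c1 c2 c3 x y, fmap1 fam c1 c2 c3 x y = - 2 * x * y) ->
  (forall c1 c2 c3 x y,
     fmap2 fam c1 c2 c3 x y = - x^2 + k * y^4 - 4 * c1 * y^3 - 3 * c2 * y^2 - 2 * c3 * y) ->
  (forall c1 c2 c3 x y,
     jac fam c1 c2 c3 x y = - 4 * x^2 - 4 * y * (2 * k * y^3 - 6 * c1 * y^2 - 3 * c2 * y - c3)) ->
  magnification_sum_vanishes fam.
Proof.
  intros Hk HN Hf1 Hf2 HJ c1 c2 c3 s1 s2 pts Hc Hnd Hlen Hpre. rewrite HN in Hlen.
  destruct (Req_dec s1 0) as [Hs1|Hs1].
  - exact (magnification_sum_D6_axis fam k Hk Hf1 Hf2 HJ c1 c2 c3 s1 s2 pts Hc Hnd Hlen Hpre Hs1).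
  - exact (magnification_sum_D6_off_axis fam k Hf1 Hf2 HJ c1 c2 c3 s1 s2 pts Hc Hnd Hlen Hpre Hs1).
Qed.

Lemma magnification_sum_symbolic_off_line c1 c2 c3 s1 s2 pts :
  ~ caustic SymbolicUmbilic c1 c2 c3 (s1, s2) -> NoDup pts -> length pts = 6%nat ->
  (forall p, fmap SymbolicUmbilic c1 c2 c3 p = (s1, s2) <-> In p pts) ->
  (forall x y, In (x, y) pts -> 2 * c1 * y + c2 <> 0) ->
  sumR (map (magnification SymbolicUmbilic c1 c2 c3) pts) = 0.
Proof.
  intros Hc Hnd Hlen Hpre Hline.
  (* On the pre-images x = - (s2 + 4 y^3 + 2 c3 y) / (2 c1 y + c2). *)
  apply (sumR_injective_roots _ pts snd
    (padd (pscale 3 (pmul [s2; 2*c3; 0; 4] [s2; 2*c3; 0; 4]))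
          (pmul [s1; c2; c1] (pmul [c2; 2*c1] [c2; 2*c1])))
    [-c2; -2*c1]); simpl; try lia; try assumption.
  - intros [x y] [x' y'] Hp Hq; simpl; intros <-.
    preimage Hp as E1 E2 J. preimage Hq as E1' E2' J'. pose proof (Hline x y Hp) as Hk.
    f_equal. apply (Rmult_eq_reg_l (2 * c1 * y + c2)); [lra|assumption].
  - intros [x y] Hp. preimage Hp as E1 E2 J. subst s1 s2. simpl. ring.
  - intros [x y] Hp. preimage Hp as E1 E2 J. pose proof (Hline x y Hp) as Hk.
    apply magnification_div; simpl; [assumption|intro; apply Hk; lra|subst s1 s2; ring].
Qed.

Lemma magnification_sum_symbolic_on_line c1 c3 y0 s1 pts :
  c1 <> 0 ->
  ~ caustic SymbolicUmbilic c1 (- 2 * c1 * y0) c3 (s1, - 4 * y0^3 - 2 * c3 * y0) ->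
  NoDup pts -> length pts = 6%nat ->
  (forall p, fmap SymbolicUmbilic c1 (- 2 * c1 * y0) c3 p = (s1, - 4 * y0^3 - 2 * c3 * y0)
             <-> In p pts) ->
  sumR (map (magnification SymbolicUmbilic c1 (- 2 * c1 * y0) c3) pts) = 0.
Proof.
  intros Hc1 Hc Hnd Hlen Hpre.
  set (Q := padd (pscale 3 (pmul [4*y0^2 + 2*c3; 4*y0; 4] [4*y0^2 + 2*c3; 4*y0; 4]))
                 (pscale (4*c1^2) [s1; -2*c1*y0; c1])).
  assert (Hoff : forall x y, In (x, y) pts -> y <> y0 ->
    2 * c1 * x = - 4 * (y^2 + y * y0 + y0^2) - 2 * c3).
  { intros x y Hp Hy. preimage Hp as E1 E2 J.
    assert (E : (y - y0) * (4 * (y^2 + y * y0 + y0^2) + 2 * c3 + 2 * c1 * x) = 0) by lra.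
    apply Rmult_integral in E as [E|E]; [lra|lra]. }
  apply (sumR_roots_double_fibre _ pts snd fst (pmul [-y0; 1] Q) [s1 - c1 * y0^2; 0; 3] [-2*c1] y0);
    subst Q; simpl; try lia; try assumption; try (intro; lra).
  - intros [x y] [x' y'] Hp Hq; simpl; intros <- Hy.
    pose proof (Hoff x y Hp Hy). pose proof (Hoff x' y Hq Hy).
    f_equal. apply (Rmult_eq_reg_l c1); [lra|assumption].
  - intros [x y] Hp. destruct (Req_dec y y0) as [->|Hy]; simpl; [ring|].
    assert (Hc3 : c3 = - c1 * x - 2 * (y^2 + y * y0 + y0^2)) by (pose proof (Hoff x y Hp Hy); lra).
    preimage Hp as E1 E2 J. subst c3 s1. ring.
  - ring.
  - intros [x y] [x' y']; simpl; intros -> ->; reflexivity.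
  - intros [x y] Hp; simpl; intros ->. preimage Hp as E1 E2 J. subst s1. ring.
  - intros [x y] Hp; simpl; intros Hy.
    assert (Hc3 : c3 = - c1 * x - 2 * (y^2 + y * y0 + y0^2)) by (pose proof (Hoff x y Hp Hy); lra).
    preimage Hp as E1 E2 J. apply magnification_div; simpl; [assumption|lra|subst c3 s1; ring].
  - intros [x y] [x' y'] Hp Hq; simpl; intros -> -> Hne.
    preimage Hp as E1 E2 J. preimage Hq as E1' E2' J'.
    destruct (Rsqr_eq x' x) as [-> | ->]; [unfold Rsqr; lra|contradiction|].
    rewrite !magnification_eq. cbn [jac]. subst s1.
    assert (Hx : x <> 0) by (intros ->; apply J; ring).
    assert (Ha : 12 * y0^2 + 2 * c3 + 2 * c1 * x <> 0) by (intro E; apply J; nra).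
    assert (Hb : 12 * y0^2 + 2 * c3 - 2 * c1 * x <> 0) by (intro E; apply J'; nra).
    match goal with |- _ = ?G / ?D =>
      replace D with (3 * (12 * y0^2 + 2 * c3 - 2 * c1 * x) * (12 * y0^2 + 2 * c3 + 2 * c1 * x))
        by ring end.
    field. repeat split; assumption.
Qed.

Lemma magnification_sum_symbolic_umbilic : magnification_sum_vanishes SymbolicUmbilic.
Proof.
  intros c1 c2 c3 s1 s2 pts Hc Hnd Hlen Hpre; simpl in Hlen.
  destruct (Exists_dec (fun p => 2 * c1 * snd p + c2 = 0) pts (fun p => Req_dec_T _ _))
    as [[[x0 y0] [Hp0 Hline]]%Exists_exists|Hoff].
  - simpl in Hline. destruct (Req_dec c1 0) as [->|Hc1].
    + assert (c2 = 0) as -> by lra.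
      apply (sumR_map_odd_involution _ pts (fun p => (- fst p, snd p)));
        [assumption| |now intros [x y]; simpl; rewrite Ropp_involutive|].
      * intros [x y] Hp. preimage Hp as E1 E2 J.
        apply Hpre. unfold fmap; simpl. f_equal; subst; ring.
      * intros [x y] Hp. preimage Hp as E1 E2 J. simpl. rewrite !magnification_eq. cbn [jac].
        assert (x <> 0) by (intros ->; apply J; ring).
        assert (12 * y^2 + 2 * c3 <> 0) by (intro E; apply J; nra).
        field. split; [assumption|]. intro; apply J. nra.
    + assert (c2 = - 2 * c1 * y0) as -> by lra.
      preimage Hp0 as E1 E2 J. assert (s2 = - 4 * y0^3 - 2 * c3 * y0) as -> by lra.
      apply (magnification_sum_symbolic_on_line _ _ _ s1); assumption.
  - apply (magnification_sum_symbolic_off_line _ _ _ s1 s2); try assumption.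
    intros x y Hp Hk. apply Hoff, Exists_exists. now exists (x, y).
Qed.

Theorem theorem1 :
  forall (fam : catastrophe) (c1 c2 c3 s1 s2 : R) (pts : list (R * R)),
    ~ caustic fam c1 c2 c3 (s1, s2) ->
    NoDup pts ->
    length pts = Nmax fam ->
    (forall p : R * R, fmap fam c1 c2 c3 p = (s1, s2) <-> In p pts) ->
    sumR (map (magnification fam c1 c2 c3) pts) = 0.
Proof.
  intros fam; destruct fam.
  - exact magnification_sum_fold.
  - exact magnification_sum_cusp.
  - exact magnification_sum_swallowtail.
  - exact magnification_sum_elliptic_umbilic.
  - exact magnification_sum_hyperbolic_umbilic.
  - exact magnification_sum_butterfly.
  - exact magnification_sum_parabolic_umbilic.
  - exact magnification_sum_wigwam.
  - exact magnification_sum_symbolic_umbilic.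
  - apply (magnification_sum_D6 _ 5); intros; simpl; try reflexivity; try ring; lra.
  - apply (magnification_sum_D6 _ (-5)); intros; simpl; try reflexivity; try ring; lra.
Qed.
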